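(* Let $q$ be a prime power and let $s,t,n,k$ be nonnegative integers with $t$ even and $n=2k$. Let $\beta\in\mathbb{F}_{q^k}$, $\gamma\in\mathbb{F}_q^*$, and $\delta\in\mathbb{F}_{q^n}$ with $\delta^{q^k}=-\delta$. Then $$f(x)=(x^{q^k}-x+\delta)^t+\beta\,\mathrm{Tr}(x)+\gamma x^{q^s}$$ is a permutation polynomial of $\mathbb{F}_{q^n}$ if and only if $\mathrm{Tr}(\beta\gamma^{-1})+1\neq0$.
   Context: $\mathrm{Tr}$ denotes the trace function from $\mathbb{F}_{q^n}$ to $\mathbb{F}_q$, $\mathrm{Tr}(x)=x+x^q+\cdots+x^{q^{n-1}}$. A permutation polynomial of $\mathbb{F}_{q^n}$ is one inducing a bijection of $\mathbb{F}_{q^n}$. *)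

From mathcomp Require Import all_boot all_order all_algebra all_field.
Set Implicit Arguments. Unset Strict Implicit. Unset Printing Implicit Defensive.
Import GRing.Theory.
Local Open Scope ring_scope.

Definition trace_q (L : finFieldType) (q n : nat) (x : L) : L :=
  \sum_(i < n) x ^+ (q ^ i).

Definition is_perm_map (L : finFieldType) (f : L -> L) : Prop := bijective f.

(* Write [f x = H x + A x] with [H x = (x^(q^k) - x + delta)^t] and the F_q-linear map
   [A x = beta Tr(x) + gamma x^(q^s)].  Since [t] is even and [delta^(q^k) = -delta],
   [H] takes values in F_{q^k} and is invariant under translation by F_{q^k}.
   If [f x = f z], then [A (x - z) = H z - H x] lies in F_{q^k}, which forces
   [d = x - z] into F_{q^k}; hence [H x = H z] and [A d = 0].  Taking traces in
   [A d = 0] gives [Tr(d) (gamma + Tr(beta)) = 0], so [d = 0] unless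
   [Tr(beta/gamma) + 1 = 0].  Conversely, when [Tr(beta/gamma) + 1 = 0], the
   element [d] with [d^(q^s) = -beta/gamma] lies in F_{q^k}, has trace 1 and
   satisfies [f d = f 0]. *)

From mathcomp Require Import all_boot all_order all_algebra all_field.
From mathcomp Require Import ring.
Import GRing.Theory.
Local Open Scope ring_scope.

Lemma exprq_fixed {R : pzSemiRingType} {q : nat} (m : nat) {c : R} :
  c ^+ q = c -> c ^+ (q ^ m) = c.
Proof.
move=> cq; elim: m => [|m IHm]; first by rewrite expn0 expr1.
by rewrite expnSr exprM IHm cq.
Qed.

Section FrobeniusPower.

Context {L : finFieldType} {q : nat}.
Hypothesis qchar : [pchar L].-nat q.

Lemma pchar_natX m : [pchar L].-nat (q ^ m)%N.
Proof. by rewrite pnatX qchar. Qed.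

Lemma exprqD m (x y : L) : (x + y) ^+ (q ^ m) = x ^+ (q ^ m) + y ^+ (q ^ m).
Proof. exact/exprDn_pchar/pchar_natX. Qed.

Lemma exprqN m (x : L) : (- x) ^+ (q ^ m) = - x ^+ (q ^ m).
Proof. exact/exprNn_pchar/pchar_natX. Qed.

Lemma exprqB m (x y : L) : (x - y) ^+ (q ^ m) = x ^+ (q ^ m) - y ^+ (q ^ m).
Proof. by rewrite exprqD exprqN. Qed.

Lemma expr0q m : (0 : L) ^+ (q ^ m) = 0.
Proof. by case/andP: qchar => q_gt0 _; rewrite expr0n expn_eq0 eqn0Ngt q_gt0. Qed.

Lemma exprq_inj m : injective (fun x : L => x ^+ (q ^ m)).
Proof.
move=> x y /= xy; apply/eqP; rewrite -subr_eq0.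
by have := expf_eq0 (x - y) (q ^ m); rewrite exprqB xy subrr eqxx => /esym/andP[_].
Qed.

Lemma exprq_sum m {I : Type} (r : seq I) (P : pred I) (F : I -> L) :
  (\sum_(i <- r | P i) F i) ^+ (q ^ m) = \sum_(i <- r | P i) F i ^+ (q ^ m).
Proof. exact: (big_morph (fun x => x ^+ (q ^ m)) (exprqD m) (expr0q m)). Qed.

Lemma exprqAC m j (x : L) : (x ^+ (q ^ m)) ^+ (q ^ j) = (x ^+ (q ^ j)) ^+ (q ^ m).
Proof. by rewrite -!exprM mulnC. Qed.

Section ArtinSchreierShift.

Context {k t : nat} {delta : L}.
Hypotheses (t_even : ~~ odd t) (delta_anti : delta ^+ (q ^ k) = - delta).
Hypothesis exprqK : forall x : L, (x ^+ (q ^ k)) ^+ (q ^ k) = x.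

Lemma shift_pow_fixed (x : L) :
  ((x ^+ (q ^ k) - x + delta) ^+ t) ^+ (q ^ k) = (x ^+ (q ^ k) - x + delta) ^+ t.
Proof.
rewrite -exprAC exprqD exprqB exprqK delta_anti.
have -> : x - x ^+ (q ^ k) - delta = - (x ^+ (q ^ k) - x + delta) by ring.
by rewrite exprNn -signr_odd (negbTE t_even) expr0 mul1r.
Qed.

Lemma shift_periodic (x d : L) : d ^+ (q ^ k) = d ->
  (x + d) ^+ (q ^ k) - (x + d) + delta = x ^+ (q ^ k) - x + delta.
Proof. by move=> dq; rewrite exprqD dq; ring. Qed.

End ArtinSchreierShift.

Section Trace.

Context {n : nat}.
Hypothesis cardL : #|L| = (q ^ n)%N.

Local Notation Tr := (@trace_q L q n).

Lemma exprq_card (x : L) : x ^+ (q ^ n) = x.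
Proof. by rewrite -cardL expf_card. Qed.

Lemma trace_qD (x y : L) : Tr (x + y) = Tr x + Tr y.
Proof. by rewrite /trace_q -big_split; apply: eq_bigr => i _; rewrite exprqD. Qed.

Lemma trace_qN (x : L) : Tr (- x) = - Tr x.
Proof. by rewrite /trace_q -sumrN; apply: eq_bigr => i _; rewrite exprqN. Qed.

Lemma trace_qB (x y : L) : Tr (x - y) = Tr x - Tr y.
Proof. by rewrite trace_qD trace_qN. Qed.

Lemma trace_q0 : Tr 0 = 0.
Proof. by rewrite /trace_q big1 // => i _; rewrite expr0q. Qed.

Lemma trace_qZ (c x : L) : c ^+ q = c -> Tr (c * x) = c * Tr x.
Proof.
move=> cq; rewrite /trace_q mulr_sumr; apply: eq_bigr => i _.
by rewrite exprMn exprq_fixed.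
Qed.

(* Raising to the power [q] shifts the summands cyclically, since [x^(q^n) = x]. *)
Lemma trace_q_fixed (x : L) : Tr x ^+ q = Tr x.
Proof.
have := exprq_sum 1 (index_enum 'I_n) xpredT (fun i => x ^+ (q ^ i)).
rewrite expn1 /trace_q => ->.
have := exprq_card x; case: n => [|m] xq; first by rewrite !big_ord0.
rewrite big_ord_recr big_ord_recl /= addrC -exprM -expnSr xq expn0 expr1.
by congr (_ + _); apply: eq_bigr => i _; rewrite -exprM -expnSr.
Qed.

Lemma trace_q_exprq m (x : L) : Tr (x ^+ (q ^ m)) = Tr x.
Proof.
rewrite -[RHS](exprq_fixed m (trace_q_fixed x)) /trace_q exprq_sum.
by apply: eq_bigr => i _; rewrite exprqAC.
Qed.

End Trace.

End FrobeniusPower.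

Section PermutationCriterion.

Context {L : finFieldType} {q n k s : nat}.
Hypotheses (qchar : [pchar L].-nat q) (cardL : #|L| = (q ^ n)%N).
Context {H : L -> L} {beta gamma : L}.
Hypothesis H_fixed : forall x, H x ^+ (q ^ k) = H x.
Hypothesis H_periodic : forall x d, d ^+ (q ^ k) = d -> H (x + d) = H x.
Hypotheses (beta_fixed : beta ^+ (q ^ k) = beta) (gamma_fixed : gamma ^+ q = gamma).
Hypothesis gamma_neq0 : gamma != 0.

Local Notation Tr := (@trace_q L q n).
Local Notation f := (fun x : L => H x + beta * Tr x + gamma * x ^+ (q ^ s)).

Lemma trace_div_gamma : Tr (beta / gamma) = gamma^-1 * Tr beta.
Proof. by rewrite mulrC trace_qZ // exprVn gamma_fixed. Qed.

Lemma exists_collision : Tr (beta / gamma) + 1 = 0 -> exists2 d, d != 0 & f d = f 0.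
Proof.
move=> trN1; have [g _ gK] := injF_bij (exprq_inj qchar s).
set d := g (- (beta / gamma)).
have ds : d ^+ (q ^ s) = - (beta / gamma) by rewrite /d gK.
have trd : Tr d = 1.
  rewrite -(trace_q_exprq qchar cardL s) ds trace_qN //.
  by apply/eqP; rewrite eq_sym -addr_eq0 addrC trN1.
have dk : d ^+ (q ^ k) = d.
  apply: (exprq_inj qchar s); rewrite /= exprqAC // ds exprqN // exprMn exprVn.
  by rewrite beta_fixed exprq_fixed.
exists d; first by apply: contra_eq_neq trd => ->; rewrite trace_q0 // eq_sym oner_neq0.
rewrite -[d in H d]add0r (H_periodic _ _ dk) trd ds expr0q // trace_q0 //.
by rewrite !mulr0 !addr0 mulr1 mulrN mulrCA divff // mulr1 addrK.
Qed.

Lemma additive_part_inj (d : L) : Tr (beta / gamma) + 1 != 0 ->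
  gamma * d ^+ (q ^ s) + beta * Tr d = 0 -> d = 0.
Proof.
move=> trN1 Ld0.
have trd0 : Tr d = 0.
  have := congr1 Tr Ld0; rewrite [beta * _]mulrC trace_qD // !trace_qZ ?trace_q_fixed //.
  rewrite trace_q_exprq // trace_q0 // mulrC -mulrDr => /eqP.
  rewrite mulf_eq0 addrC addr_eq0 => /orP[/eqP // | /eqP trbeta]; move: trN1.
  by rewrite trace_div_gamma trbeta mulrN mulVf // addNr eqxx.
move: Ld0; rewrite trd0 mulr0 addr0 => /eqP; rewrite mulf_eq0 (negbTE gamma_neq0) /=.
by move=> /eqP ds0; apply: (exprq_inj qchar s); rewrite /= ds0 expr0q.
Qed.

Lemma injective_of_trace : Tr (beta / gamma) + 1 != 0 -> injective f.
Proof.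
move=> trN1 x z fxz; set d := x - z.
have Ld : gamma * d ^+ (q ^ s) + beta * Tr d = H z - H x.
  have fxz0 : f x - f z = 0 by rewrite /= fxz subrr.
  by apply/eqP; rewrite -subr_eq0 -fxz0 exprqB // trace_qB //; apply/eqP; ring.
have dk : d ^+ (q ^ k) = d.
  have := congr1 (fun y => y ^+ (q ^ k)) Ld; rewrite /= exprqB // !H_fixed -Ld.
  rewrite exprqD // !exprMn beta_fixed (exprq_fixed k gamma_fixed).
  rewrite (exprq_fixed k (trace_q_fixed qchar cardL d)) exprqAC //.
  by move/addIr/(mulfI gamma_neq0)/(exprq_inj qchar s).
have Hxz : H x = H z by rewrite -(subrK z x) addrC H_periodic.
apply/eqP; rewrite -subr_eq0; apply/eqP/additive_part_inj => //.
by rewrite Ld Hxz subrr.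
Qed.

Lemma bijective_iff_trace : bijective f <-> Tr (beta / gamma) + 1 != 0.
Proof.
split=> [f_bij | /injective_of_trace/injF_bij //].
apply/eqP=> /exists_collision [d d_neq0 fd0].
by move/negP: d_neq0; apply; apply/eqP/(bij_inj f_bij).
Qed.

End PermutationCriterion.

Theorem mainTheorem4 (L : finFieldType) (p e q s t n k : nat)
  (hp : prime p) (hq : q = (p ^ e)%N) (hL : #|L| = (q ^ n)%N)
  (ht : ~~ odd t) (hn : n = (2 * k)%N)
  (beta gamma delta : L)
  (hbeta : beta ^+ (q ^ k) = beta)
  (hgamma : gamma ^+ q = gamma) (hgamma0 : gamma != 0)
  (hdelta : delta ^+ (q ^ k) = - delta) :
  is_perm_map (fun x : L =>
     (x ^+ (q ^ k) - x + delta) ^+ t + beta * trace_q q n x + gamma * x ^+ (q ^ s))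
  <-> trace_q q n (beta / gamma) + 1 != 0.
Proof.
have qchar : [pchar L].-nat q.
  have pL : p \in [pchar L].
    by apply: (@card_finPcharP _ p (e * n)) => //; rewrite hL hq expnM.
  by rewrite (eq_pnat _ (pcharf_eq pL)) hq pnatX pnat_id.
have exprqK (x : L) : (x ^+ (q ^ k)) ^+ (q ^ k) = x.
  by rewrite -exprM -expnD addnn -mul2n -hn (exprq_card hL).
apply: (bijective_iff_trace qchar hL _ _ hbeta hgamma hgamma0).
  exact: (shift_pow_fixed qchar ht hdelta exprqK).
by move=> x d dk; rewrite (shift_periodic qchar _ _ dk).
Qed.
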